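(* Let $k$ be an algebraically closed field, let $1\le s\le t$ be integers, $R=k[x,y]/(x^s,y^t)$ with its standard grading, and $\theta$ the image of $x+y$ in $R$. Let $\zeta,\eta$ be nonzero homogeneous elements of $R$. If $\sigma(k[\theta]\zeta)\neq\sigma(k[\theta]\eta)$, then $k[\theta]\zeta\cap k[\theta]\eta=\{0\}$; hence $k[\theta]\zeta+k[\theta]\eta=k[\theta]\zeta\oplus k[\theta]\eta$.
   Context: $R=\bigoplus_i R_i$ where $R_i$ is spanned by the images of monomials of degree $i$. For a nonzero homogeneous element $\zeta\in R_m$, the socle degree $\sigma(k[\theta]\zeta)$ of the cyclic $k[\theta]$-module $k[\theta]\zeta$ is the integer $d$ such that the socle of $k[\theta]\zeta$ as a $k[\theta]$-module is contained in $R_d$; equivalently $d=m+e$ where $e$ is the largest integer with $\theta^e\zeta\neq0$. *)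

From HB Require Import structures.
From mathcomp Require Import all_boot all_order all_algebra.
Set Implicit Arguments. Unset Strict Implicit. Unset Printing Implicit Defensive.
Import GRing.Theory.
Local Open Scope ring_scope.

(* Model of R = k[x,y]/(x^s, y^t): an element is its coordinate matrix in the
   monomial basis x^i y^j (i < s, j < t); entry (i,j) = coefficient of x^i y^j. *)
Definition Ralg (k : fieldType) (s t : nat) := 'M[k]_(s, t).

(* multiplication in R: product of monomials x^i1 y^j1 * x^i2 y^j2 is
   x^(i1+i2) y^(j1+j2), which vanishes unless i1+i2 < s and j1+j2 < t *)
Definition mulR (k : fieldType) (s t : nat) (A B : Ralg k s t) : Ralg k s t :=
  \matrix_(i < s, j < t)
    \sum_(i1 < s) \sum_(j1 < t) \sum_(i2 < s) \sum_(j2 < t)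
      (if ((i1 + i2)%N == i) && ((j1 + j2)%N == j) then A i1 j1 * B i2 j2 else 0).

Definition xR (k : fieldType) (s t : nat) : Ralg k s t :=
  \matrix_(i < s, j < t) ((nat_of_ord i == 1%N) && (nat_of_ord j == 0%N))%:R.
Definition yR (k : fieldType) (s t : nat) : Ralg k s t :=
  \matrix_(i < s, j < t) ((nat_of_ord i == 0%N) && (nat_of_ord j == 1%N))%:R.

Definition thetaR (k : fieldType) (s t : nat) : Ralg k s t := xR k s t + yR k s t.

Definition thpow (k : fieldType) (s t : nat) (e : nat) (z : Ralg k s t) : Ralg k s t :=
  iter e (mulR (thetaR k s t)) z.

Definition homogR (k : fieldType) (s t : nat) (z : Ralg k s t) (m : nat) : Prop :=
  forall (i : 'I_s) (j : 'I_t), (i + j)%N != m -> z i j = 0.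

Definition in_cyc (k : fieldType) (s t : nat) (z w : Ralg k s t) : Prop :=
  exists p : {poly k}, w = \sum_(e < size p) p`_e *: thpow e z.

(* socle degree of k[theta] z for a nonzero homogeneous z in R_m:
   d = m + e where e is the largest integer with theta^e z != 0 *)
Definition socle_deg (k : fieldType) (s t : nat) (z : Ralg k s t) (d : nat) : Prop :=
  exists m e : nat,
    [/\ homogR z m, thpow e z != 0,
        (forall e' : nat, thpow e' z != 0 -> (e' <= e)%N) & d = (m + e)%N].

(* If [w = p(theta) z] is nonzero and [a] is the lowest index with [p_a != 0],
   then [theta^(E-a) w = p_a theta^E z] with [E] the last exponent such that
   [theta^E z != 0], and [theta^(E-a+1) w = 0].  So the last nonzero element
   [theta^n w] of the chain [w, theta w, theta^2 w, ...], which depends on [w]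
   alone, is homogeneous of degree sigma(k[theta] z).  If [w] lies in two cyclic
   modules, this element is nonzero and homogeneous of both socle degrees,
   which must therefore agree. *)
From HB Require Import structures.
From mathcomp Require Import all_boot all_order all_algebra.
From mathcomp Require Import zify.

Set Implicit Arguments.
Unset Strict Implicit.
Unset Printing Implicit Defensive.

Import GRing.Theory.
Local Open Scope ring_scope.

Lemma poly_lowest_coef (S : nzSemiRingType) (p : {poly S}) : p != 0 ->
  exists a, [/\ (a < size p)%N, p`_a != 0 & forall e, (e < a)%N -> p`_e = 0].
Proof.
move=> p_neq0; have p_coef : exists a, p`_a != 0.
  by exists (size p).-1; rewrite -lead_coefE lead_coef_eq0.
case: (ex_minnP p_coef) => a pa a_min; exists a; split=> //.
- by rewrite ltnNge; apply: contra pa => h; rewrite nth_default.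
- by move=> e ea; apply/eqP; apply: contraTT ea => /a_min; rewrite -leqNgt.
Qed.

Section ThetaPowers.
Variables (k : fieldType) (s t : nat).
Local Notation R := (Ralg k s t).

Lemma mulR_linear (A : R) : linear (mulR A).
Proof.
move=> c B C; apply/matrixP => i j; rewrite !mxE mulr_sumr -big_split.
apply: eq_bigr => i1 _; rewrite mulr_sumr -big_split.
apply: eq_bigr => j1 _; rewrite mulr_sumr -big_split.
apply: eq_bigr => i2 _; rewrite mulr_sumr -big_split.
apply: eq_bigr => j2 _ /=.
by case: ifP; rewrite ?mxE ?mulr0 ?addr0 // mulrDr mulrCA.
Qed.

HB.instance Definition _ (A : R) :=
  GRing.isLinear.Build k R R *:%R (mulR A) (mulR_linear A).

Lemma thpow_linear (e : nat) : linear (@thpow k s t e).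
Proof.
elim: e => [|e IH] c B C //=.
by rewrite /thpow /= -!/(thpow _ _) IH linearP.
Qed.

HB.instance Definition _ (e : nat) :=
  GRing.isLinear.Build k R R *:%R (@thpow k s t e) (thpow_linear e).

Lemma thpowS (e : nat) (A : R) : thpow e.+1 A = mulR (thetaR k s t) (thpow e A).
Proof. by []. Qed.

Lemma thpowD (a b : nat) (A : R) : thpow a (thpow b A) = thpow (a + b) A.
Proof. by rewrite /thpow iterD. Qed.

Lemma thpow_eq0_leq (a b : nat) (A : R) :
  (a <= b)%N -> thpow a A = 0 -> thpow b A = 0.
Proof. by move=> ab h; rewrite -(subnK ab) -thpowD h linear0. Qed.

Lemma thpow_last_uniq (m n : nat) (A : R) :
  thpow m A != 0 -> thpow m.+1 A = 0 -> thpow n A != 0 -> thpow n.+1 A = 0 ->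
  m = n.
Proof.
move=> Am Am1 An An1; case: (ltngtP m n) => // [mn | nm].
- by move: An; rewrite (thpow_eq0_leq mn Am1) eqxx.
- by move: Am; rewrite (thpow_eq0_leq nm An1) eqxx.
Qed.

Lemma homogR_mulR (A B : R) (a b : nat) :
  homogR A a -> homogR B b -> homogR (mulR A B) (a + b).
Proof.
move=> hA hB i j hij; rewrite mxE.
apply: big1 => i1 _; apply: big1 => j1 _; apply: big1 => i2 _; apply: big1 => j2 _.
case: ifP => // /andP[/eqP e1 /eqP e2].
case: (eqVneq (i1 + j1)%N a) => h1; last by rewrite hA // mul0r.
case: (eqVneq (i2 + j2)%N b) => h2; last by rewrite hB // mulr0.
by move: hij; rewrite -e1 -e2 -h1 -h2; lia.
Qed.

Lemma homogR_theta : homogR (thetaR k s t) 1.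
Proof.
move=> i j; rewrite !mxE.
by case: i j => [[|[|i]] ?] [[|[|j]] ?] //= _; rewrite addr0.
Qed.

Lemma homogR_thpow (A : R) (m e : nat) :
  homogR A m -> homogR (thpow e A) (m + e).
Proof.
move=> hA; elim: e => [|e IH]; first by rewrite addn0.
by rewrite thpowS addnS -add1n; apply: homogR_mulR => //; apply: homogR_theta.
Qed.

Lemma homogRZ (A : R) (c : k) (m : nat) : homogR A m -> homogR (c *: A) m.
Proof. by move=> hA i j ij; rewrite mxE hA // mulr0. Qed.

Lemma homogR_inj (A : R) (m n : nat) :
  A != 0 -> homogR A m -> homogR A n -> m = n.
Proof.
case/matrix0Pn=> i [j Aij] hm hn.
have deg_ij d : homogR A d -> (i + j)%N = d.
  by move=> hd; apply/eqP; apply: contraNT Aij => /hd ->.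
by rewrite -(deg_ij m hm) (deg_ij n hn).
Qed.

Lemma in_cyc_socle (z w : R) (m E : nat) :
  homogR z m -> thpow E z != 0 -> (forall e, thpow e z != 0 -> (e <= E)%N) ->
  in_cyc z w -> w != 0 ->
  exists n, [/\ thpow n w != 0, thpow n.+1 w = 0 & homogR (thpow n w) (m + E)].
Proof.
move=> hz zE Emax [p ->] w_neq0.
have z_vanish e : (E < e)%N -> thpow e z = 0.
  by move=> Ee; apply/eqP; apply: contraTT Ee; rewrite -leqNgt; apply: Emax.
have p_neq0 : p != 0.
  by apply: contraNneq w_neq0 => ->; rewrite size_poly0 big_ord0.
have [a [a_size pa p_low]] := poly_lowest_coef p_neq0.
have theta_w n : thpow n (\sum_(e < size p) p`_e *: thpow e z)
                 = \sum_(e < size p) p`_e *: thpow (n + e) z.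
  by rewrite linear_sum; apply: eq_bigr => e _; rewrite linearZ /= thpowD.
have aE : (a <= E)%N.
  rewrite leqNgt; apply: contra w_neq0 => Ea.
  have := theta_w 0%N; rewrite /= => ->; apply/eqP/big1 => e _.
  case: (ltnP e a) => [/p_low -> | ae]; first by rewrite scale0r.
  by rewrite z_vanish ?scaler0 //; apply: leq_trans Ea ae.
have top : thpow (E - a) (\sum_(e < size p) p`_e *: thpow e z) = p`_a *: thpow E z.
  rewrite theta_w (bigD1 (Ordinal a_size)) //= subnK // big1 ?addr0 // => e ea.
  case: (ltngtP e a) => [/p_low -> | ae | ae]; first by rewrite scale0r.
  - by rewrite z_vanish ?scaler0 //; lia.
  - by move: ea; rewrite -val_eqE /= ae eqxx.
exists (E - a)%N; rewrite top; split.
- by rewrite scaler_eq0 negb_or pa.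
- by rewrite thpowS top linearZ /= -thpowS z_vanish ?scaler0.
- by apply/homogRZ/homogR_thpow.
Qed.

End ThetaPowers.

Theorem lemma2p13 (k : closedFieldType) (s t : nat) (hs : (1 <= s)%N) (hst : (s <= t)%N)
  (zeta eta : Ralg k s t) (mz me : nat) (dz de : nat) :
  homogR zeta mz -> zeta != 0 -> homogR eta me -> eta != 0 ->
  socle_deg zeta dz -> socle_deg eta de -> dz <> de ->
  forall w : Ralg k s t, in_cyc zeta w -> in_cyc eta w -> w = 0.
Proof.
move=> _ _ _ _ [m1 [E1 [hm1 zE1 E1max ->]]] [m2 [E2 [hm2 eE2 E2max ->]]] dz_de w.
move=> w_zeta w_eta; apply/eqP; apply: contraT => w_neq0.
have [n1 [wn1 wn1S deg1]] := in_cyc_socle hm1 zE1 E1max w_zeta w_neq0.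
have [n2 [wn2 wn2S deg2]] := in_cyc_socle hm2 eE2 E2max w_eta w_neq0.
have n12 := thpow_last_uniq wn1 wn1S wn2 wn2S.
by rewrite -n12 in deg2; case: dz_de; apply: homogR_inj wn1 deg1 deg2.
Qed.
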